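(* Let $\tau_a$ and $\tau_b$ be the endomorphisms of $\{a,b\}^*$ defined by $\tau_a(a)=a$, $\tau_a(b)=ab$ and $\tau_b(a)=ba$, $\tau_b(b)=b$. If $\mathbf{w}$ is an infinite LSP word over $\{a,b\}$ and $f\in\{\tau_a,\tau_b\}$, then $f(\mathbf{w})$ is LSP. Consequently, an infinite word over $\{a,b\}$ is LSP if and only if it is $\{\tau_a,\tau_b\}$-adic.
   Context: A finite word $u$ is a left special factor of a word $w$ if there are distinct letters $x\neq y$ with $xu$ and $yu$ factors of $w$. A word is LSP if every left special factor of it is a prefix of it. For a set $S$ of morphisms, an infinite word $\mathbf{w}$ is $S$-adic if there exist $(f_n)_{n\ge1}$ in $S$ and infinite words $(\mathbf{w}_n)_{n\ge1}$ with $\mathbf{w}_1=\mathbf{w}$ and $\mathbf{w}_n=f_n(\mathbf{w}_{n+1})$ for all $n\ge1$. *)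

From HB Require Import structures.
From mathcomp Require Import all_boot.
Set Implicit Arguments. Unset Strict Implicit. Unset Printing Implicit Defensive.

Inductive letter := la | lb.

Definition letter_to_bool (x : letter) : bool := if x is lb then true else false.
Definition bool_to_letter (c : bool) : letter := if c then lb else la.
Lemma letter_boolK : cancel letter_to_bool bool_to_letter.
Proof. by case. Qed.
HB.instance Definition _ := Equality.copy letter (can_type letter_boolK).

Definition infword := nat -> letter.

Definition pref (w : infword) (n : nat) : seq letter := mkseq w n.

Definition factor (w : infword) (u : seq letter) : Prop :=
  exists i, u = mkseq (fun j => w (i + j)) (size u).

Definition is_prefix (u : seq letter) (w : infword) : Prop := u = pref w (size u).

Definition left_special (w : infword) (u : seq letter) : Prop :=
  exists x y : letter, x != y /\ factor w (x :: u) /\ factor w (y :: u).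

Definition LSP (w : infword) : Prop :=
  forall u, left_special w u -> is_prefix u w.

Definition morphism := letter -> seq letter.

Definition morph_fin (f : morphism) (u : seq letter) : seq letter := flatten (map f u).

(* Image of an infinite word under a non-erasing morphism: the k-th letter of
   f(w) is the k-th letter of f(w_0 ... w_k) (which has length >= k+1 when
   f is non-erasing). *)
Definition morph_inf (f : morphism) (w : infword) : infword :=
  fun k => nth la (morph_fin f (pref w k.+1)) k.

Definition tau_a : morphism := fun x => match x with la => [:: la] | lb => [:: la; lb] end.
Definition tau_b : morphism := fun x => match x with la => [:: lb; la] | lb => [:: lb] end.

(* S-adic words (indexed from 0 instead of 1). *)
Definition S_adic (S : morphism -> Prop) (w : infword) : Prop :=
  exists (f : nat -> morphism) (ws : nat -> infword),
    (forall n, S (f n)) /\ (forall k, ws 0 k = w k) /\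
    (forall n k, ws n k = morph_inf (f n) (ws n.+1) k).

Definition S_tau : morphism -> Prop := fun f => f = tau_a \/ f = tau_b.

(* The image tau_a(w) is a concatenation of blocks a and ab, and every a starts a block.
   Hence a prefix u of tau_a(w) parses as tau_a(t) followed by an optional final a, with t a
   prefix of w and t determined by u alone.  A nonempty left special factor u of tau_a(w)
   starts with a, because b is always preceded by a; the letter preceding an occurrence of u
   is then the letter of w preceding the corresponding occurrence of t.  So t is a shorter
   left special factor of w, and if t is a prefix of w then so is u of tau_a(w).  Induction
   on |u| along a directive sequence shows that {tau_a, tau_b}-adic words are LSP, tau_b
   being tau_a conjugated by the exchange of letters.
   Conversely, an LSP word w beginning with a has no factor bb (an earlier ab would make b
   left special), so w = tau_a(w') with w' read off the letters following the block starts.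
   Moreover w' is LSP: if t is left special in w', then tau_a(t) a is left special in
   tau_a(w'), hence a prefix, and decoding it shows that t is a prefix of w'.  Iterating
   this desubstitution produces the directive sequence. *)

From mathcomp Require Import all_boot zify.
Set Implicit Arguments. Unset Strict Implicit. Unset Printing Implicit Defensive.

Definition shift (w : infword) (m : nat) : infword := fun j => w (m + j).

Lemma shift_shift w m n : shift (shift w m) n =1 shift w (m + n).
Proof. by move=> j; rewrite /shift addnA. Qed.

Lemma pref_ext w1 w2 n : w1 =1 w2 -> pref w1 n = pref w2 n.
Proof. by move=> e; rewrite /pref (eq_mkseq e). Qed.

Lemma pref_add w m n : pref w (m + n) = pref w m ++ pref (shift w m) n.
Proof.
have e : iota m n = map (addn m) (iota 0 n) by rewrite -iotaDl addn0.
by rewrite /pref /mkseq iotaD map_cat add0n e -map_comp.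
Qed.

Lemma pref_cons w n : pref w n.+1 = w 0 :: pref (shift w 1) n.
Proof. by rewrite -add1n pref_add. Qed.

Lemma pref_rcons w n : pref w n.+1 = rcons (pref w n) (w n).
Proof. by rewrite -addn1 pref_add cats1 /shift addn0. Qed.

Lemma is_prefix_pref w n : is_prefix (pref w n) w.
Proof. by rewrite /is_prefix size_mkseq. Qed.

Lemma is_prefix_ext w1 w2 u : w1 =1 w2 -> is_prefix u w1 -> is_prefix u w2.
Proof. by move=> e; rewrite /is_prefix (pref_ext _ e). Qed.

Lemma factor_ext w1 w2 u : w1 =1 w2 -> factor w1 u -> factor w2 u.
Proof. by move=> e [i hi]; exists i; rewrite {1}hi; apply: eq_mkseq => j; rewrite e. Qed.

Lemma left_special_ext w1 w2 u : w1 =1 w2 -> left_special w1 u -> left_special w2 u.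
Proof.
by move=> e [x [y [xy [hx hy]]]]; exists x, y; do !split=> //; apply: factor_ext e _.
Qed.

Lemma LSP_ext w1 w2 : w1 =1 w2 -> LSP w1 -> LSP w2.
Proof.
move=> e hw u /(left_special_ext (fsym e)) /hw; exact: is_prefix_ext.
Qed.

Lemma factorE w u : factor w u <-> exists i, is_prefix u (shift w i).
Proof. by []. Qed.

Lemma is_prefix_consP w x u : is_prefix (x :: u) w <-> w 0 = x /\ is_prefix u (shift w 1).
Proof. by rewrite /is_prefix /= pref_cons; split=> [[-> <-] | [-> <-]]. Qed.

Lemma factor_consP w x u : factor w (x :: u) <-> exists i, w i = x /\ is_prefix u (shift w i.+1).
Proof.
have e i : shift (shift w i) 1 =1 shift w i.+1 by move=> j; rewrite shift_shift addn1.
split=> [/factorE [i /is_prefix_consP [hx hu]] | [i [hx hu]]]; exists i.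
- by rewrite /shift addn0 in hx; split=> //; apply: is_prefix_ext hu.
- by apply/is_prefix_consP; rewrite /shift addn0; split=> //; apply: is_prefix_ext (fsym (e i)) hu.
Qed.

Lemma factor_suffix w i s1 s2 : is_prefix (s1 ++ s2) (shift w i) -> factor w s2.
Proof.
rewrite /is_prefix size_cat pref_add => /eqP; rewrite eqseq_cat ?size_mkseq // => /andP[_ /eqP e].
exists (i + size s1); rewrite {1}e; apply: pref_ext; exact: shift_shift.
Qed.

Definition nonerasing (f : morphism) : Prop := forall x, 0 < size (f x).

Definition block_start (f : morphism) (w : infword) (p : nat) : nat :=
  size (morph_fin f (pref w p)).

Lemma morph_fin_cons f x s : morph_fin f (x :: s) = f x ++ morph_fin f s.
Proof. by []. Qed.

Lemma morph_fin_cat f s t : morph_fin f (s ++ t) = morph_fin f s ++ morph_fin f t.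
Proof. by rewrite /morph_fin map_cat flatten_cat. Qed.

Lemma morph_inf_ext f w1 w2 : w1 =1 w2 -> morph_inf f w1 =1 morph_inf f w2.
Proof. by move=> e k; rewrite /morph_inf (pref_ext _ e). Qed.

Lemma block_startS f w p : block_start f w p.+1 = block_start f w p + size (f (w p)).
Proof. by rewrite /block_start pref_rcons -cats1 morph_fin_cat size_cat /morph_fin /= cats0. Qed.

Section NonErasing.
Variable f : morphism.
Hypothesis f_ne : nonerasing f.

Lemma size_morph_fin s : size s <= size (morph_fin f s).
Proof. by elim: s => //= x s; rewrite /morph_fin /= size_cat; have := f_ne x; lia. Qed.

Lemma nth_morph_fin_pref w m n k : m <= n -> k < size (morph_fin f (pref w m)) ->
  nth la (morph_fin f (pref w n)) k = nth la (morph_fin f (pref w m)) k.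
Proof. by move=> mn hk; rewrite -(subnKC mn) pref_add morph_fin_cat nth_cat hk. Qed.

Lemma nth_morph_inf w n k : k < size (morph_fin f (pref w n)) ->
  morph_inf f w k = nth la (morph_fin f (pref w n)) k.
Proof.
move=> hk; have hk1 : k < size (morph_fin f (pref w k.+1)).
  by have := size_morph_fin (pref w k.+1); rewrite size_mkseq.
rewrite /morph_inf; case: (leqP n k.+1) => h; first exact: nth_morph_fin_pref.
by rewrite (nth_morph_fin_pref (ltnW h)).
Qed.

Lemma is_prefix_morph w t : is_prefix t w -> is_prefix (morph_fin f t) (morph_inf f w).
Proof.
move=> ht; apply: (@eq_from_nth _ la); rewrite ?size_mkseq // => i hi.
by rewrite nth_mkseq // (@nth_morph_inf w (size t)) -?ht.
Qed.

Lemma morph_inf_shift w p : shift (morph_inf f w) (block_start f w p) =1 morph_inf f (shift w p).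
Proof.
move=> k; have hk : block_start f w p + k < size (morph_fin f (pref w (p + k.+1))).
  rewrite pref_add morph_fin_cat size_cat.
  have := size_morph_fin (pref (shift w p) k.+1); rewrite size_mkseq /block_start; lia.
rewrite /shift (nth_morph_inf hk) pref_add morph_fin_cat nth_cat ltnNge leq_addr /=.
by rewrite /block_start addKn.
Qed.

Lemma morph_inf_block w p k : k < size (f (w p)) ->
  morph_inf f w (block_start f w p + k) = nth la (f (w p)) k.
Proof.
move=> hk; have := morph_inf_shift w p k; rewrite /shift => ->.
by rewrite (@nth_morph_inf _ 1) /morph_fin /= cats0 addn0.
Qed.

End NonErasing.

Lemma tau_a_ne : nonerasing tau_a. Proof. by case. Qed.
Lemma tau_b_ne : nonerasing tau_b. Proof. by case. Qed.

Lemma tau_a_block_start w p : morph_inf tau_a w (block_start tau_a w p) = la.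
Proof. by rewrite -[block_start _ _ _]addn0 (morph_inf_block tau_a_ne); case: (w p). Qed.

Lemma tau_a_block_start_b w p : w p = lb -> morph_inf tau_a w (block_start tau_a w p).+1 = lb.
Proof. by move=> hp; rewrite -addn1 (morph_inf_block tau_a_ne) hp. Qed.

Lemma tau_a_block_last w p : morph_inf tau_a w (block_start tau_a w p.+1).-1 = w p.
Proof.
rewrite block_startS; case hp: (w p) => /=; first by rewrite addn1 tau_a_block_start.
by rewrite addn2 tau_a_block_start_b.
Qed.

Lemma tau_a_position w i :
  exists p, i = block_start tau_a w p \/ i = (block_start tau_a w p).+1 /\ w p = lb.
Proof.
elim: i => [|i [p [->|[-> hp]]]]; first by exists 0; left.
- by case hp: (w p); [exists p.+1; left; rewrite block_startS hp addn1 | exists p; right].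
- by exists p.+1; left; rewrite block_startS hp addn2.
Qed.

Lemma tau_a_before_b w i : morph_inf tau_a w i.+1 = lb -> morph_inf tau_a w i = la.
Proof.
have [p [->|[-> hp]]] := tau_a_position w i; first by rewrite tau_a_block_start.
have -> : (block_start tau_a w p).+2 = block_start tau_a w p.+1 by rewrite block_startS hp addn2.
by rewrite tau_a_block_start.
Qed.

(* A final [la] is read as the start of the next block, never as a whole block:
   [tau_a (rcons t la) = rcons (tau_a t) la] makes the parse otherwise ambiguous. *)
Fixpoint decode_a (u : seq letter) : seq letter :=
  match u with
  | la :: lb :: r => lb :: decode_a r
  | la :: ((la :: _) as r) => la :: decode_a r
  | _ => [::]
  end.
Arguments decode_a u : simpl nomatch.

Definition tail_a (u : seq letter) : seq letter := if last lb u is la then [:: la] else [::].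

Lemma size_decode_a u : u != [::] -> size (decode_a u) < size u.
Proof.
suff le_pred : size (decode_a u) <= (size u).-1 by case: u le_pred.
elim: {u}(size u) {-2}u (leqnn (size u)) => [|n IH] [|[] [|[] r]] //= hs.
- by rewrite ltnS in hs; move: (IH (la :: r) hs).
- by rewrite ltnS in hs; move: (IH r (ltnW hs)) => /leq_trans; apply; rewrite leq_pred.
Qed.

Lemma decode_a_cat t s : decode_a (morph_fin tau_a t ++ la :: s) = t ++ decode_a (la :: s).
Proof.
elim: t => //= x t IH.
have [r e] : exists r, morph_fin tau_a t ++ la :: s = la :: r by case: t {IH} => [|[] t]; eexists.
by rewrite morph_fin_cons -catA e; case: x => /=; rewrite -e IH.
Qed.

Lemma decode_tail_a_la t :
  decode_a (morph_fin tau_a t ++ [:: la]) = t /\ tail_a (morph_fin tau_a t ++ [:: la]) = [:: la].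
Proof. by rewrite decode_a_cat cats0 /tail_a last_cat. Qed.

Lemma decode_tail_a_lb t : last lb t = lb ->
  decode_a (morph_fin tau_a t) = t /\ tail_a (morph_fin tau_a t) = [::].
Proof.
case/lastP: t => // t c; rewrite last_rcons => ->.
by rewrite -cats1 morph_fin_cat decode_a_cat /tail_a last_cat.
Qed.

Lemma pref_tau_a_parse v n : exists2 t, is_prefix t v &
  pref (morph_inf tau_a v) n = morph_fin tau_a t ++ [:: la] \/
  pref (morph_inf tau_a v) n = morph_fin tau_a t /\ last lb t = lb.
Proof.
have image_pref p : pref (morph_inf tau_a v) (block_start tau_a v p) = morph_fin tau_a (pref v p).
  exact/esym/(is_prefix_morph tau_a_ne)/is_prefix_pref.
have [p [->|[-> _]]] := tau_a_position v n; last first.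
  exists (pref v p); first exact: is_prefix_pref.
  by left; rewrite pref_rcons image_pref tau_a_block_start cats1.
case: p => [|p]; first by exists [::] => //; right.
rewrite image_pref pref_rcons -cats1 morph_fin_cat.
case hp: (v p).
- by exists (pref v p); [exact: is_prefix_pref | left].
- exists (pref v p.+1); first exact: is_prefix_pref.
  by right; rewrite pref_rcons last_rcons hp -cats1 morph_fin_cat.
Qed.

Lemma is_prefix_decode_a v u : is_prefix u (morph_inf tau_a v) ->
  is_prefix (decode_a u) v /\ u = morph_fin tau_a (decode_a u) ++ tail_a u.
Proof.
move=> hu; have [t ht [e|[e hl]]] := pref_tau_a_parse v (size u); rewrite -hu in e; subst u.
- by have [-> ->] := decode_tail_a_la t.
- by have [-> ->] := decode_tail_a_lb hl; rewrite cats0.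
Qed.

Lemma is_prefix_tau_a_tail w t : is_prefix t w ->
  is_prefix (morph_fin tau_a t ++ [:: la]) (morph_inf tau_a w).
Proof.
move=> ht; have hs : size (morph_fin tau_a t) = block_start tau_a w (size t).
  by rewrite /block_start -ht.
rewrite /is_prefix size_cat addn1 pref_rcons -(is_prefix_morph tau_a_ne ht) hs.
by rewrite tau_a_block_start cats1.
Qed.

Lemma factor_tau_a_cons w c u : factor (morph_inf tau_a w) (c :: la :: u) ->
  exists2 p, w p = c & is_prefix (la :: u) (morph_inf tau_a (shift w p.+1)).
Proof.
case/factor_consP => i [hc hu]; have [hla _] := (is_prefix_consP _ _ _).1 hu.
rewrite /shift addn0 in hla.
have [p [hp|[hp hb]]] := tau_a_position w i.+1; last by rewrite hp tau_a_block_start_b in hla.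
case: p hp => [|p] hp; first by rewrite /block_start in hp.
exists p; first by rewrite -tau_a_block_last -hp.
by apply: is_prefix_ext hu; rewrite hp; exact: morph_inf_shift tau_a_ne w p.+1.
Qed.

Lemma left_special_decode_a w u : left_special (morph_inf tau_a w) u -> u != [::] ->
  left_special w (decode_a u) /\ (is_prefix (decode_a u) w -> is_prefix u (morph_inf tau_a w)).
Proof.
case: u => [|[] u] // [x [y [xy [hx hy]]]] _; last first.
  have before_b c : factor (morph_inf tau_a w) (c :: lb :: u) -> c = la.
    case/factor_consP => i [<- /is_prefix_consP [hb _]].
    by apply: tau_a_before_b; rewrite -hb /shift addn0.
  by rewrite (before_b _ hx) (before_b _ hy) in xy.
have [p hp /is_prefix_decode_a [hpt _]] := factor_tau_a_cons hx.
have [q hq /is_prefix_decode_a [hqt e]] := factor_tau_a_cons hy.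
split.
  by exists x, y; do !split=> //; apply/factor_consP; [exists p | exists q].
move=> ht; rewrite e /tail_a; case: (last lb _).
- exact: is_prefix_tau_a_tail.
- by rewrite cats0; exact: is_prefix_morph tau_a_ne _ _ ht.
Qed.

Lemma factor_tau_a_image w c t : factor w (c :: t) ->
  factor (morph_inf tau_a w) (c :: morph_fin tau_a t ++ [:: la]).
Proof.
case/factorE => k /is_prefix_tau_a_tail.
move/(is_prefix_ext (fsym (morph_inf_shift tau_a_ne w k))).
have -> : morph_fin tau_a (c :: t) ++ [:: la] =
  (if c is lb then [:: la] else [::]) ++ c :: morph_fin tau_a t ++ [:: la] by case: c.
exact: factor_suffix.
Qed.

Lemma LSP_of_tau_a w : LSP (morph_inf tau_a w) -> LSP w.
Proof.
move=> hL t [x [y [xy [hx hy]]]].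
have hls : left_special (morph_inf tau_a w) (morph_fin tau_a t ++ [:: la]).
  by exists x, y; do !split=> //; exact: factor_tau_a_image.
have [+ _] := is_prefix_decode_a (hL _ hls).
by have [-> _] := decode_tail_a_la t.
Qed.

Definition swap_letter (x : letter) : letter := if x is la then lb else la.
Definition swap_word (w : infword) : infword := fun k => swap_letter (w k).

Lemma swap_letterK : involutive swap_letter. Proof. by case. Qed.

Lemma swap_wordK w : swap_word (swap_word w) =1 w.
Proof. by move=> k; rewrite /swap_word swap_letterK. Qed.

Lemma map_swap_letterK : involutive (map swap_letter).
Proof. exact: mapK swap_letterK. Qed.

Lemma pref_swap_word w n : pref (swap_word w) n = map swap_letter (pref w n).
Proof. by rewrite /pref /mkseq -map_comp. Qed.

Lemma is_prefix_swap w u : is_prefix u w -> is_prefix (map swap_letter u) (swap_word w).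
Proof. by rewrite /is_prefix size_map pref_swap_word => {1}->. Qed.

Lemma left_special_swap w u :
  left_special (swap_word w) u -> left_special w (map swap_letter u).
Proof.
have factor_swap v : factor (swap_word w) v -> factor w (map swap_letter v).
  case/factorE => i /is_prefix_swap hi; apply/factorE; exists i.
  by apply: is_prefix_ext hi => k; exact: swap_wordK (shift w i) k.
move=> [x [y [xy [/factor_swap hx /factor_swap hy]]]].
by exists (swap_letter x), (swap_letter y); do !split=> //; case: x y xy {hx hy} => [] [].
Qed.

Lemma LSP_swap w : LSP w -> LSP (swap_word w).
Proof.
by move=> hL u /left_special_swap /hL /is_prefix_swap; rewrite map_swap_letterK.
Qed.

Lemma morph_inf_tau_b w : morph_inf tau_b w =1 swap_word (morph_inf tau_a (swap_word w)).
Proof.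
have swap_morph_fin s : morph_fin tau_a (map swap_letter s) = map swap_letter (morph_fin tau_b s).
  by elim: s => //= x s IH; rewrite !morph_fin_cons IH map_cat; case: x.
move=> k; rewrite /morph_inf /swap_word pref_swap_word swap_morph_fin (nth_map la) ?swap_letterK //.
by have := size_morph_fin tau_b_ne (pref w k.+1); rewrite size_mkseq.
Qed.

Lemma left_special_desub f w u : S_tau f -> left_special (morph_inf f w) u -> u != [::] ->
  exists2 u', size u' < size u &
    left_special w u' /\ (is_prefix u' w -> is_prefix u (morph_inf f w)).
Proof.
case=> -> hu u0.
  by exists (decode_a u); [exact: size_decode_a | exact: left_special_decode_a].
have /left_special_swap hu' := left_special_ext (morph_inf_tau_b w) hu.
have u0' : map swap_letter u != [::] by case: u u0 {hu hu'}.
have [hls hpre] := left_special_decode_a hu' u0'.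
exists (map swap_letter (decode_a (map swap_letter u))).
  by rewrite size_map -(size_map swap_letter u); exact: size_decode_a.
split; first exact: left_special_swap.
move/is_prefix_swap; rewrite map_swap_letterK => /hpre /is_prefix_swap.
by rewrite map_swap_letterK; apply: is_prefix_ext; exact: fsym (morph_inf_tau_b w).
Qed.

Lemma LSP_morph_inf f w : S_tau f -> LSP w -> LSP (morph_inf f w).
Proof.
move=> hf hL [|x u] hu //.
by have [u' _ [/hL hu' hpre]] := left_special_desub hf hu isT; exact: hpre.
Qed.

Lemma S_adic_LSP w : S_adic S_tau w -> LSP w.
Proof.
move=> [f [ws [hf [h0 hs]]]].
suff prefix_ws m n u : size u <= m -> left_special (ws n) u -> is_prefix u (ws n).
  by apply: (LSP_ext h0) => u; exact: prefix_ws.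
elim: m n u => [|m IH] n [|x r] // hm hu.
have e : ws n =1 morph_inf (f n) (ws n.+1) by exact: hs.
have [u' hsz [hu' hpre]] := left_special_desub (hf n) (left_special_ext e hu) isT.
apply: is_prefix_ext (fsym e) _; apply/hpre/(IH n.+1 u' _ hu').
by rewrite -ltnS (leq_trans hsz).
Qed.

Section DesubstituteA.
Variable w : infword.

Fixpoint block_pos (p : nat) : nat :=
  if p is p'.+1 then block_pos p' + (if w (block_pos p').+1 is lb then 2 else 1) else 0.

(* The p-th block of [w] starts at [block_pos p]; the letter after its [la] tells
   whether the block is [la] or [la; lb]. *)
Definition desub_a : infword := fun p => w (block_pos p).+1.

Lemma block_start_desub_a p : block_start tau_a desub_a p = block_pos p.
Proof. by elim: p => //= p IH; rewrite block_startS IH /desub_a; case: (w _). Qed.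

Hypotheses (w_LSP : LSP w) (w0 : w 0 = la).

Lemma LSP_no_bb k : w k = lb -> w k.+1 = lb -> False.
Proof.
move=> wk wk1; have [j [wj wj1]] : exists j, w j = la /\ w j.+1 = lb.
  elim: k wk {wk1} => [|k IH] wk; first by rewrite w0 in wk.
  by case wk': (w k); [exists k | exact: IH].
have b_special : left_special w [:: lb].
  exists la, lb; split=> //; split; [exists j | exists k];
  by rewrite /= /mkseq /= addn0 addn1 ?wj ?wj1 ?wk ?wk1.
by have := w_LSP b_special; rewrite /is_prefix /= /pref /mkseq /= w0.
Qed.

Lemma block_pos_la p : w (block_pos p) = la.
Proof.
elim: p => [|p IH] //=; case wb: (w (block_pos p).+1); first by rewrite addn1.
rewrite addn2; case wb2: (w (block_pos p).+2) => //.
by case: (LSP_no_bb wb wb2).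
Qed.

Lemma morph_inf_desub_a : w =1 morph_inf tau_a desub_a.
Proof.
move=> i; have [p [->|[-> hp]]] := tau_a_position desub_a i.
  by rewrite tau_a_block_start block_start_desub_a block_pos_la.
by rewrite tau_a_block_start_b // -hp block_start_desub_a.
Qed.

Lemma LSP_desub_a : LSP desub_a.
Proof. by apply: LSP_of_tau_a; exact: LSP_ext morph_inf_desub_a w_LSP. Qed.

End DesubstituteA.

Definition desub (w : infword) : morphism * infword :=
  if w 0 is la then (tau_a, desub_a w) else (tau_b, swap_word (desub_a (swap_word w))).

Lemma desubP w : LSP w ->
  [/\ S_tau (desub w).1, LSP (desub w).2 & w =1 morph_inf (desub w).1 (desub w).2].
Proof.
rewrite /desub; case h0: (w 0) => hL.
  by split; [left | exact: LSP_desub_a | exact: morph_inf_desub_a].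
have hL' := LSP_swap hL; have h0' : swap_word w 0 = la by rewrite /swap_word h0.
split; [by right | exact/LSP_swap/LSP_desub_a | move=> k /=].
rewrite morph_inf_tau_b {1}/swap_word (morph_inf_ext _ (swap_wordK _) k).
by rewrite -(morph_inf_desub_a hL' h0' k) /swap_word swap_letterK.
Qed.

Lemma LSP_S_adic w : LSP w -> S_adic S_tau w.
Proof.
move=> hL; pose ws n := iter n (fun v => (desub v).2) w.
have LSP_ws n : LSP (ws n) by elim: n => //= n IH; have [] := desubP IH.
exists (fun n => (desub (ws n)).1), ws.
by split; [|split] => // n; have [] := desubP (LSP_ws n).
Qed.

Theorem proposition2 :
  (forall (w : infword) (f : morphism), LSP w -> S_tau f -> LSP (morph_inf f w)) /\
  (forall w : infword, LSP w <-> S_adic S_tau w).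
Proof.
split; first by move=> w f hL hf; exact: LSP_morph_inf.
by move=> w; split; [exact: LSP_S_adic | exact: S_adic_LSP].
Qed.
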